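(* Let $N_\mathrm{T},N_\mathrm{R},N_\mathrm{S},G,L$ be positive integers with $N_\mathrm{S}=GL$, let $N=\min(N_\mathrm{T},N_\mathrm{R})$, and let $\mathbf{H}_\mathrm{D}\in\mathbb{C}^{N_\mathrm{R}\times N_\mathrm{T}}$, $\mathbf{H}_\mathrm{B}\in\mathbb{C}^{N_\mathrm{R}\times N_\mathrm{S}}$, $\mathbf{H}_\mathrm{F}\in\mathbb{C}^{N_\mathrm{S}\times N_\mathrm{T}}$. Suppose $k=\min(\mathrm{rank}(\mathbf{H}_\mathrm{B}),\mathrm{rank}(\mathbf{H}_\mathrm{F}))$ satisfies $k\le N$. Define an auxiliary matrix $\mathbf{T}$ as any matrix satisfying $$\mathbf{T}\mathbf{T}^\mathsf{H}=\begin{cases}\mathbf{H}_\mathrm{D}(\mathbf{I}-\mathbf{V}_\mathrm{F}\mathbf{V}_\mathrm{F}^\mathsf{H})\mathbf{H}_\mathrm{D}^\mathsf{H}, & \text{if } \mathrm{rank}(\mathbf{H}_\mathrm{F})=k,\\ \mathbf{H}_\mathrm{D}^\mathsf{H}(\mathbf{I}-\mathbf{U}_\mathrm{B}\mathbf{U}_\mathrm{B}^\mathsf{H})\mathbf{H}_\mathrm{D}, & \text{if } \mathrm{rank}(\mathbf{H}_\mathrm{B})=k,\end{cases}$$ where $\mathbf{V}_\mathrm{F}\in\mathbb{C}^{N_\mathrm{T}\times k}$ has orthonormal columns that are right singular vectors of $\mathbf{H}_\mathrm{F}$ associated with its $k$ nonzero singular values, and $\mathbf{U}_\mathrm{B}\in\mathbb{C}^{N_\mathrm{R}\times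 k}$ has orthonormal columns that are left singular vectors of $\mathbf{H}_\mathrm{B}$ associated with its $k$ nonzero singular values. Then for every scattering matrix $\mathbf{\Theta}=\mathrm{diag}(\mathbf{\Theta}_1,\ldots,\mathbf{\Theta}_G)$ with $\mathbf{\Theta}_g\in\mathbb{U}^{L\times L}$ (in particular for D-RIS, $L=1$, and for BD-RIS of any group size), the equivalent channel $\mathbf{H}=\mathbf{H}_\mathrm{D}+\mathbf{H}_\mathrm{B}\mathbf{\Theta}\mathbf{H}_\mathrm{F}$ satisfies $$\sigma_n(\mathbf{H})\le\sigma_{n-k}(\mathbf{T})\ \text{ if } n>k,\qquad \sigma_n(\mathbf{H})\ge\sigma_n(\mathbf{T})\ \text{ if } n<N-k+1.$$
   Context: $\mathbb{U}^{L\times L}$ is the set of $L\times L$ complex unitary matrices; $\mathrm{diag}(\cdot)$ of matrices builds a block-diagonal matrix. $\sigma_n(\cdot)$ denotes the $n$-th largest singular value (singular values in non-increasing order, taken to be $0$ for indices beyond the smaller matrix dimension). *)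

(* complex numbers are R[i] for an arbitrary real closed
   field R (this includes the genuine complex numbers, R = the reals). *)
From HB Require Import structures.
From mathcomp Require Import all_boot all_order all_algebra.
From mathcomp Require Import complex.
Set Implicit Arguments. Unset Strict Implicit. Unset Printing Implicit Defensive.
Import Order.TTheory GRing.Theory Num.Theory.
Local Open Scope ring_scope.
Local Open Scope sesquilinear_scope.

Section Defs.
Variable R : rcfType.
Local Notation C := R[i].

Definition gram_eigs (m n : nat) (A : 'M[C]_(m, n)) : seq C :=
  sval (closed_field_poly_normal (char_poly (A ^t* *m A))).

(* Singular values of A in non-increasing order: square roots of the
   eigenvalues of A^H A (these eigenvalues are real and >= 0; we take their
   real part to land in R). There are n of them; the ones beyond min(m,n)
   are 0. *)
Definition sing_vals (m n : nat) (A : 'M[C]_(m, n)) : seq R :=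
  sort (>=%R) [seq Num.sqrt (@complex.Re R z) | z <- gram_eigs A].

(* sigma A i = sigma_i(A), the i-th largest singular value (1-based index),
   and 0 for indices beyond the number of columns. *)
Definition sigma (m n : nat) (A : 'M[C]_(m, n)) (i : nat) : R :=
  nth 0 (sing_vals A) i.-1.

Definition right_sing_vec (m n : nat) (A : 'M[C]_(m, n)) (v : 'cV[C]_n) (s : C) :=
  exists u : 'cV[C]_m, [/\ u ^t* *m u = 1%:M, A *m v = s *: u & A ^t* *m u = s *: v].

Definition left_sing_vec (m n : nat) (A : 'M[C]_(m, n)) (u : 'cV[C]_m) (s : C) :=
  exists v : 'cV[C]_n, [/\ v ^t* *m v = 1%:M, A *m v = s *: u & A ^t* *m u = s *: v].

Lemma sum_const_GL (G L : nat) : (\sum_(g < G) L)%N = (G * L)%N.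
Proof. by rewrite sum_nat_const card_ord. Qed.

Definition blkdiag (G L : nat) (B : 'I_G -> 'M[C]_L) : 'M[C]_(G * L) :=
  castmx (sum_const_GL G L, sum_const_GL G L) (@mxdiag C G (fun=> L) B).

End Defs.

From HB Require Import structures.
From mathcomp Require Import all_boot all_order all_algebra.
From mathcomp Require Import complex.
From mathcomp Require Import zify.
Set Implicit Arguments. Unset Strict Implicit. Unset Printing Implicit Defensive.
Import Order.TTheory GRing.Theory Num.Theory.
Local Open Scope ring_scope.
Local Open Scope sesquilinear_scope.

(* The singular values of X are the square roots of the eigenvalues of the
   Hermitian matrix X X^H, so the Courant-Fischer min-max principle applies.
   If rank H_F = k, the k right singular vectors in V_F span the row space of
   H_F, so H_F P = 0 for the orthogonal projector P = I - V_F V_F^H; hence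
   H P = H_D P whatever Theta is, and T T^H = (H P)(H P)^H says that T has the
   singular values of H P.  Symmetrically, if rank H_B = k then T has the
   singular values of H^H Q with Q = I - U_B U_B^H.  Both bounds are then the
   interlacing sigma_(n+k)(X) <= sigma_n(X P) <= sigma_n(X) for a projector P
   of corank k, obtained by intersecting the subspaces on which |r X^H| is
   bounded below or above by a singular value. *)

Section SortedNth.
Context {disp : Order.disp_t} {T : orderType disp}.
Implicit Type s : seq T.

Lemma count_ge_nth (x0 : T) s j : sorted >=%O s -> (j < size s)%N ->
  (j < count (>= nth x0 s j)%O s)%N.
Proof.
move=> s_sorted js; rewrite -[X in count _ X](cat_take_drop j.+1 s) count_cat.
suff /eqP-> : count (>= nth x0 s j)%O (take j.+1 s) == j.+1 by rewrite leq_addr.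
rewrite -{2}(size_takel js) -all_count; apply/(all_nthP x0) => i.
rewrite size_takel // => ij.
rewrite nth_take //; apply: (sorted_leq_nth ge_trans ge_refl) => //.
by rewrite inE (leq_trans ij).
Qed.

Lemma count_le_nth (x0 : T) s j : sorted >=%O s -> (j < size s)%N ->
  (size s - j <= count (<= nth x0 s j)%O s)%N.
Proof.
move=> s_sorted js; rewrite -[X in count _ X](cat_take_drop j s) count_cat.
suff /eqP-> : count (<= nth x0 s j)%O (drop j s) == (size s - j)%N by rewrite leq_addl.
rewrite -size_drop -all_count; apply/(all_nthP x0) => i.
rewrite size_drop ltn_subRL => ijs.
rewrite nth_drop; apply: (sorted_leq_nth ge_trans ge_refl);
  by rewrite ?inE ?leq_addr // addnC.
Qed.

Lemma nth_sort_ge_nseq (x0 : T) s a : all (>= x0)%O s ->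
  nth x0 (sort >=%O (nseq a x0 ++ s)) =1 nth x0 (sort >=%O s).
Proof.
move=> s_ge j; suff -> : sort >=%O (nseq a x0 ++ s) = sort >=%O s ++ nseq a x0.
  by rewrite nth_cat nth_nseq if_same; case: ltnP => // /(nth_default x0).
apply: (sorted_eq ge_trans ge_anti); first exact/sort_sorted/ge_total.
- rewrite sorted_pairwise ?pairwise_cat; last exact: ge_trans.
  rewrite -sorted_pairwise; [|exact: ge_trans]; rewrite sort_sorted; [|exact: ge_total].
  apply/and3P; split => //.
    by apply/allrelP => x y; rewrite mem_sort => /(allP s_ge) ? /nseqP[-> _].
  by elim: a => //= a ->; rewrite andbT; apply/allP => y /nseqP[-> _] /=.
- by rewrite perm_sort perm_catC perm_cat2r perm_sym perm_sort.
Qed.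
End SortedNth.

(* Both sides are 'X^n * det [['X, A]; [B, 1]], by eliminating either
   off-diagonal block. *)
Lemma char_poly_mulmxC (F : comNzRingType) m n (A : 'M[F]_(m, n)) (B : 'M[F]_(n, m)) :
  'X^n * char_poly (A *m B) = 'X^m * char_poly (B *m A).
Proof.
rewrite /char_poly /char_poly_mx !map_mxM.
set A' := map_mx polyC A; set B' := map_mx polyC B.
pose M := block_mx ('X%:M : 'M_m) A' B' (1%:M : 'M_n).
have detM_AB : \det M = \det ('X%:M - A' *m B').
  have := det_mulmx (block_mx 1%:M (- A') 0 1%:M) M.
  rewrite det_ublock !det1 !mul1r /M mulmx_block.
  rewrite !mul1mx !mul0mx !mulmx1 !add0r mulNmx subrr.
  by rewrite det_lblock det1 mulr1 => <-.
have detM_BA : 'X^n * \det M = 'X^m * \det ('X%:M - B' *m A').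
  have := det_mulmx (block_mx 1%:M 0 (- B') ('X%:M : 'M_n)) M.
  rewrite det_lblock det1 mul1r det_scalar /M mulmx_block.
  rewrite !mul1mx !mul0mx !mulmx1 !addr0 !mulNmx mul_mx_scalar mul_scalar_mx addNr.
  by rewrite det_ublock det_scalar addrC => <-.
by rewrite -detM_AB detM_BA.
Qed.

Lemma sub_rowsubP (F : fieldType) p m n (f : 'I_p -> 'I_m) (M : 'M[F]_(m, n)) r :
  (r <= rowsub f M)%MS ->
  exists2 e : 'rV[F]_m, r = e *m M & forall i, i \notin codom f -> e 0 i = 0.
Proof.
move=> /submxP[c ->]; exists (c *m rowsub f 1%:M); first by rewrite -mulmxA -rowsubE.
move=> i fNi; rewrite mxE big1 // => a _; rewrite !mxE.
by case: eqP => [fai|_]; [by rewrite -fai codom_f in fNi | rewrite mulr0].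
Qed.

Lemma mxrank_cap_ge (F : fieldType) n p q (A : 'M[F]_(p, n)) (B : 'M[F]_(q, n)) :
  (\rank A + \rank B - n <= \rank (A :&: B))%N.
Proof. by have := mxrank_sum_cap A B; have := rank_leq_col (A + B)%MS; lia. Qed.

Lemma capmx_nonzero (F : fieldType) n p q (A : 'M[F]_(p, n)) (B : 'M[F]_(q, n)) :
  (n < \rank A + \rank B)%N -> exists2 r : 'rV[F]_n, r != 0 & (r <= A :&: B)%MS.
Proof.
move=> rkAB; exists (nz_row (A :&: B)%MS); last exact: nz_row_sub.
by rewrite nz_row_eq0 -mxrank_eq0 -lt0n; have := mxrank_cap_ge A B; lia.
Qed.

Section SingularValues.
Variable R : rcfType.
Local Notation C := R[i].

Definition eigs n (M : 'M[C]_n) : seq C :=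
  sval (closed_field_poly_normal (char_poly M)).

Definition sqrtRe (z : C) : R := Num.sqrt (complex.Re z).

Lemma char_poly_eigs n (M : 'M[C]_n) : char_poly M = \prod_(z <- eigs M) ('X - z%:P).
Proof.
rewrite /eigs; case: closed_field_poly_normal => s /= ->.
by rewrite (monicP (char_poly_monic M)) scale1r.
Qed.

Lemma eigs_mulmxC m n (A : 'M[C]_(m, n)) (B : 'M[C]_(n, m)) :
  perm_eq (nseq n 0 ++ eigs (A *m B)) (nseq m 0 ++ eigs (B *m A)).
Proof.
have prod_nseq0 a : \prod_(z <- nseq a (0 : C)) ('X - z%:P) = 'X^a.
  by rewrite big_nseq subr0; elim: a => //= a ->; rewrite exprS.
apply: prod_XsubC_eq; rewrite !big_cat /= !prod_nseq0 -!char_poly_eigs.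
exact: char_poly_mulmxC.
Qed.

Lemma sigma_perm_eigs m n p q (A : 'M[C]_(m, n)) (B : 'M[C]_(p, q)) a b :
  perm_eq (nseq a 0 ++ eigs (A ^t* *m A)) (nseq b 0 ++ eigs (B ^t* *m B)) ->
  sigma A =1 sigma B.
Proof.
have sqrtRe_ge0 s : all (>= 0) [seq sqrtRe z | z <- s].
  by apply/allP => _ /mapP[z _ ->]; exact: sqrtr_ge0.
have nseq_sqrtRe a' s : nseq a' 0 ++ [seq sqrtRe z | z <- s] = map sqrtRe (nseq a' 0 ++ s).
  by rewrite map_cat map_nseq /sqrtRe sqrtr0.
move=> eAB j; rewrite /sigma /sing_vals -(nth_sort_ge_nseq a) ?sqrtRe_ge0 //.
rewrite -[RHS](nth_sort_ge_nseq b) ?sqrtRe_ge0 // !nseq_sqrtRe.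
congr nth; apply/perm_sortP; [exact: ge_total | exact: ge_trans | exact: ge_anti |].
exact: perm_map.
Qed.

Lemma sigma_adjmx m n (A : 'M[C]_(m, n)) : sigma (A ^t*) =1 sigma A.
Proof. by apply: sigma_perm_eigs; rewrite trmxCK; exact: eigs_mulmxC. Qed.

Lemma sigma_gramC m n p (A : 'M[C]_(m, n)) (B : 'M[C]_(m, p)) :
  A *m A ^t* = B *m B ^t* -> sigma A =1 sigma B.
Proof.
move=> AB j; rewrite -sigma_adjmx -[RHS]sigma_adjmx.
by rewrite /sigma /sing_vals /gram_eigs !trmxCK AB.
Qed.

Lemma sigma_ge0 m n (A : 'M[C]_(m, n)) j : 0 <= sigma A j.
Proof.
rewrite /sigma; case: (ltnP j.-1 (size (sing_vals A))) => [jA|/(nth_default 0)-> //].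
by have /mapP[z _ ->] : nth 0 (sing_vals A) j.-1 \in [seq sqrtRe z | z <- gram_eigs A];
  [rewrite -(mem_sort >=%R) mem_nth | exact: sqrtr_ge0].
Qed.

Local Notation "''[' u ]" := (dotmx u u) : ring_scope.

Lemma dotmx_mulmx m n (r : 'rV[C]_m) (B : 'M[C]_(m, n)) :
  '[r *m B] = (r *m (B *m B ^t*) *m r ^t*) 0 0.
Proof. by rewrite dotmxE trmx_mul map_mxM !mulmxA. Qed.

Lemma dotmx_unitary m (M : 'M[C]_m) (e : 'rV[C]_m) : M \is unitarymx -> '[e *m M] = '[e].
Proof. by move=> MU; rewrite dotmx_mulmx (unitarymxP MU) mulmx1 dotmxE. Qed.

Lemma dotmx_diag m (d e : 'rV[C]_m) :
  (e *m diag_mx d *m e ^t*) 0 0 = \sum_i d 0 i * `|e 0 i| ^+ 2.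
Proof.
rewrite mul_mx_diag mxE; apply: eq_bigr => i _.
by rewrite !mxE normCK mulrA [d _ _ * _]mulrC.
Qed.

Lemma mxrank_rowsub_unitary p m n (f : 'I_p -> 'I_m) (M : 'M[C]_(m, n)) :
  injective f -> M \is unitarymx -> \rank (rowsub f M) = p.
Proof.
move=> f_inj /row_unitarymxP MU; apply: mxrank_unitary; apply/row_unitarymxP => a b.
by rewrite !row_rowsub MU (inj_eq f_inj).
Qed.

Lemma le_sqrtRe (z : C) (y : R) : 0 <= z -> 0 <= y -> (y <= sqrtRe z) = (y%:C%C ^+ 2 <= z).
Proof.
case: z => a b; rewrite [0 <= _]lecE /= => /andP[/eqP b0 a_ge0] y_ge0; subst b.
by rewrite -rmorphXn lecE /= eqxx -(ler_sqrt _ a_ge0) sqrtr_sqr ger0_norm.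
Qed.

Lemma sqrtRe_le (z : C) (y : R) : 0 <= z -> 0 <= y -> (sqrtRe z <= y) = (z <= y%:C%C ^+ 2).
Proof.
case: z => a b; rewrite [0 <= _]lecE /= => /andP[/eqP b0 a_ge0] y_ge0; subst b.
by rewrite -rmorphXn lecE /= eqxx -(ler_sqrt _ (sqr_ge0 y)) sqrtr_sqr ger0_norm.
Qed.

Lemma ler_sqr_dotmx n (x y : R) (u : 'rV[C]_n) : u != 0 -> 0 <= x -> 0 <= y ->
  (x%:C%C ^+ 2 * '[u] <= y%:C%C ^+ 2 * '[u]) = (x <= y).
Proof.
move=> u_neq0 x_ge0 y_ge0; rewrite ler_pM2r ?dnorm_gt0 // -!rmorphXn lecR.
by rewrite ler_pXn2r ?nnegrE.
Qed.

Section GramSpectral.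
Variables (m n : nat) (B : 'M[C]_(m, n)).
Let M := spectralmx (B *m B ^t*).
Let d := spectral_diag (B *m B ^t*).
Let sv := sort >=%R [seq sqrtRe (d 0 i) | i <- enum 'I_m].

Let M_unitary : M \is unitarymx. Proof. exact: spectral_unitarymx. Qed.

Lemma gram_spectralE : B *m B ^t* = M ^t* *m diag_mx d *m M.
Proof.
have /orthomx_spectralP {1}-> : B *m B ^t* \is normalmx.
  by apply/normalmxP; rewrite trmx_mul map_mxM trmxCK.
by rewrite invmx_unitary.
Qed.

Lemma dotmx_gram_spectral (e : 'rV[C]_m) :
  '[e *m M *m B] = \sum_i d 0 i * `|e 0 i| ^+ 2.
Proof.
rewrite dotmx_mulmx gram_spectralE trmx_mul map_mxM !mulmxA.
by rewrite !(mulmxtVK _ M_unitary) dotmx_diag.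
Qed.

Lemma spectral_diag_ge0 i : 0 <= d 0 i.
Proof.
have := dotmx_gram_spectral (delta_mx 0 i); rewrite (bigD1 i) //= big1 => [|j ji].
  by rewrite mxE !eqxx normr1 expr1n mulr1 addr0 => <-; exact: dnorm_ge0.
by rewrite mxE (negbTE ji) andbF normr0 expr0n mulr0.
Qed.

Lemma eigs_gram_spectral : perm_eq (eigs (B *m B ^t*)) [seq d 0 i | i <- enum 'I_m].
Proof.
have eigs_diag : perm_eq (eigs (B *m B ^t*)) (eigs (diag_mx d)).
  rewrite -(perm_cat2l (nseq m 0)) gram_spectralE -mulmxA.
  by have := eigs_mulmxC (M ^t*) (diag_mx d *m M); rewrite mulmxtVK.
apply: (perm_trans eigs_diag); apply: prod_XsubC_eq.
rewrite -char_poly_eigs char_poly_trig ?diag_mx_is_trig // big_map big_enum /=.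
by apply: eq_bigr => i _; rewrite mxE eqxx.
Qed.

Lemma sigma_spectral j : sigma B j.+1 = nth 0 sv j.
Proof.
rewrite -sigma_adjmx /sigma /sing_vals /gram_eigs trmxCK; congr nth.
apply/perm_sortP; [exact: ge_total | exact: ge_trans | exact: ge_anti |].
by rewrite (map_comp sqrtRe (fun i => d 0 i)); exact/perm_map/eigs_gram_spectral.
Qed.

Lemma size_sv : size sv = m.
Proof. by rewrite size_sort size_map size_enum_ord. Qed.

Lemma count_sv (p : pred R) : count p sv = #|[pred i | p (sqrtRe (d 0 i))]|.
Proof. by rewrite count_sort count_map enumT cardE /enum_mem size_filter. Qed.

Lemma sigma_out_rows j : (m <= j)%N -> sigma B j.+1 = 0.
Proof. by move=> mj; rewrite sigma_spectral nth_default // size_sv. Qed.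

Lemma sigma_lower_subspace j : (j < m)%N ->
  exists p, exists2 W : 'M[C]_(p, m), (j < \rank W)%N &
    forall r, (r <= W)%MS -> (sigma B j.+1)%:C%C ^+ 2 * '[r] <= '[r *m B].
Proof.
move=> jm; have := sigma_ge0 B j.+1; rewrite sigma_spectral.
set y := nth 0 sv j => y_ge0; pose S := [pred i | y <= sqrtRe (d 0 i)].
exists #|S|, (rowsub (enum_val (A := S)) M).
  rewrite mxrank_rowsub_unitary //; last exact: enum_val_inj.
  by rewrite -count_sv count_ge_nth ?size_sv //; exact/sort_sorted/ge_total.
move=> _ /sub_rowsubP[e -> e_S]; rewrite dotmx_unitary // dotmx_gram_spectral.
rewrite dotmxE mxE mulr_sumr; apply: ler_sum => i _; rewrite !mxE -normCK.
case: (boolP (i \in S)) => [iS|iNS]; last first.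
  rewrite e_S ?normr0 ?expr0n ?mulr0 //.
  by apply: contra iNS => /codomP[a ->]; exact: enum_valP.
by rewrite ler_wpM2r ?exprn_ge0 // -le_sqrtRe ?spectral_diag_ge0.
Qed.

Lemma sigma_upper_subspace j : (j < m)%N ->
  exists p, exists2 W : 'M[C]_(p, m), (m - j <= \rank W)%N &
    forall r, (r <= W)%MS -> '[r *m B] <= (sigma B j.+1)%:C%C ^+ 2 * '[r].
Proof.
move=> jm; have := sigma_ge0 B j.+1; rewrite sigma_spectral.
set y := nth 0 sv j => y_ge0; pose S := [pred i | sqrtRe (d 0 i) <= y].
exists #|S|, (rowsub (enum_val (A := S)) M).
  rewrite mxrank_rowsub_unitary //; last exact: enum_val_inj.
  rewrite -(count_sv (<= y)%O) -[X in (X - _)%N]size_sv.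
  by rewrite count_le_nth ?size_sv //; exact/sort_sorted/ge_total.
move=> _ /sub_rowsubP[e -> e_S]; rewrite dotmx_unitary // dotmx_gram_spectral.
rewrite dotmxE mxE mulr_sumr; apply: ler_sum => i _; rewrite !mxE -normCK.
case: (boolP (i \in S)) => [iS|iNS]; last first.
  rewrite e_S ?normr0 ?expr0n ?mulr0 //.
  by apply: contra iNS => /codomP[a ->]; exact: enum_valP.
by rewrite ler_wpM2r ?exprn_ge0 // -sqrtRe_le ?spectral_diag_ge0.
Qed.

End GramSpectral.

Definition coproj n k (V : 'M[C]_(n, k)) : 'M[C]_n := 1%:M - V *m V ^t*.

Section Coprojection.
Variables (n k : nat) (V : 'M[C]_(n, k)).
Local Notation P := (coproj V).

Lemma coproj_adj : P ^t* = P.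
Proof. by rewrite /coproj linearB /= map_mxB trmx1 map_mx1 trmx_mul map_mxM trmxCK. Qed.

Lemma mulmx_coproj_id p (X : 'M[C]_(p, n)) : X *m V = 0 -> X *m P = X.
Proof. by move=> XV; rewrite mulmxBr mulmx1 mulmxA XV mul0mx subr0. Qed.

Hypothesis V_orthonormal : V ^t* *m V = 1%:M.

Lemma adj_mulmx_coproj : V ^t* *m P = 0.
Proof. by rewrite mulmxBr mulmx1 mulmxA V_orthonormal mul1mx subrr. Qed.

Lemma coproj_idem : P *m P = P.
Proof.
by rewrite {1}/coproj mulmxBl mul1mx -mulmxA adj_mulmx_coproj mulmx0 subr0.
Qed.

Lemma gram_mulmx_coproj p (X : 'M[C]_(p, n)) : X *m P *m (X *m P) ^t* = X *m P *m X ^t*.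
Proof. by rewrite trmx_mul map_mxM coproj_adj mulmxA -(mulmxA X) coproj_idem. Qed.

Lemma dotmx_coproj (r : 'rV[C]_n) : '[r] = '[r *m P] + '[r *m V].
Proof.
have -> : '[r] = (r *m (P *m P ^t* + V *m V ^t*) *m r ^t*) 0 0.
  by rewrite coproj_adj coproj_idem subrK mulmx1 dotmxE.
by rewrite mulmxDr mulmxDl mxE -!dotmx_mulmx.
Qed.

Lemma dotmx_coproj_le (r : 'rV[C]_n) : '[r *m P] <= '[r].
Proof. by rewrite [leRHS]dotmx_coproj lerDl dnorm_ge0. Qed.

Lemma mulmx_coproj_eq0 p (X : 'M[C]_(p, n)) :
  (V ^t* <= X)%MS -> \rank X = k -> X *m P = 0.
Proof.
move=> VX rkX; have rkV : \rank (V ^t*) = k.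
  by apply: mxrank_unitary; apply/unitarymxP; rewrite trmxCK.
have /submxP[Y ->] : (X <= V ^t*)%MS.
  by have := (mxrank_leqif_eq VX).2; rewrite rkV rkX eqxx => /esym/andP[].
by rewrite -mulmxA adj_mulmx_coproj mulmx0.
Qed.

End Coprojection.

Section CoprojInterlacing.
Variables (m n k : nat) (X : 'M[C]_(n, m)) (V : 'M[C]_(m, k)).
Hypothesis V_orthonormal : V ^t* *m V = 1%:M.
Local Notation P := (coproj V).

Let sigma_mulmx_coprojE : sigma (X *m P) =1 sigma (P *m X ^t*).
Proof. by move=> j; rewrite -sigma_adjmx trmx_mul map_mxM coproj_adj. Qed.

(* Courant-Fischer: a subspace on which |r P X^H| >= x |r| is mapped
   injectively by P (when x > 0) into a space that must meet the subspace
   on which |s X^H| <= y |s|. *)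
Lemma sigma_coproj_le j : (0 < j)%N -> sigma (X *m P) j <= sigma X j.
Proof.
move=> /prednK <-; move: j.-1 => {}j.
rewrite sigma_mulmx_coprojE -[sigma X _]sigma_adjmx.
set B := X ^t*.
have [jm|mj] := ltnP j m; last by rewrite sigma_out_rows ?sigma_ge0.
have [p1 [W1 rkW1 W1_lower]] := sigma_lower_subspace (P *m B) jm.
have [p2 [W2 rkW2 W2_upper]] := sigma_upper_subspace B jm.
have [x_eq0|x_neq0] := eqVneq (sigma (P *m B) j.+1) 0; first by rewrite x_eq0 sigma_ge0.
have x2_gt0 : 0 < (sigma (P *m B) j.+1)%:C%C ^+ 2.
  by rewrite -rmorphXn ltcR exprn_gt0 // lt0r x_neq0 sigma_ge0.
have W1_kerP (r : 'rV_m) : (r <= W1 :&: kermx P)%MS -> r = 0.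
  rewrite sub_capmx => /andP[rW1 /sub_kermxP rP0]; apply/eqP/negPn/negP => r_neq0.
  have := W1_lower r rW1; rewrite mulmxA rP0 mul0mx linear0l.
  by rewrite lt_geF // mulr_gt0 ?dnorm_gt0.
have rkW1P : \rank (W1 *m P) = \rank W1.
  rewrite -[RHS](mxrank_mul_ker W1 P) -[LHS]addn0; congr (_ + _)%N; apply/esym/eqP.
  rewrite mxrank_eq0; apply/eqP/row_matrixP => i; rewrite row0.
  exact/W1_kerP/row_sub.
have [s s_neq0] := capmx_nonzero (A := W1 *m P) (B := W2) (ltac:(lia)).
rewrite sub_capmx => /andP[/submxP[c s_def] sW2].
have r_neq0 : c *m W1 != 0.
  by apply: contraNneq s_neq0; rewrite s_def mulmxA => ->; rewrite mul0mx.
rewrite -(ler_sqr_dotmx r_neq0 (sigma_ge0 _ _) (sigma_ge0 _ _)).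
apply: le_trans (W1_lower _ (submxMl c W1)) _; rewrite mulmxA -(mulmxA c) -s_def.
apply: le_trans (W2_upper s sW2) _; rewrite ler_wpM2l ?exprn_ge0 ?lecR ?sigma_ge0 //.
by rewrite s_def mulmxA dotmx_coproj_le.
Qed.

(* Courant-Fischer again: a j-dimensional subspace on which |r X^H| >= y |r|,
   a subspace of codimension j - k - 1 on which |r P X^H| <= x |r|, and the
   kernel of V^H (on which P is the identity) share a nonzero vector. *)
Lemma sigma_le_coproj j : (k < j)%N -> sigma X j <= sigma (X *m P) (j - k).
Proof.
move=> /subnKC <-; rewrite addSn -addnS addKn addnS.
rewrite sigma_mulmx_coprojE -[sigma X _]sigma_adjmx.
set B := X ^t*; set i := (j - k.+1)%N.
have [kim|mki] := ltnP (k + i) m; last by rewrite sigma_out_rows ?sigma_ge0.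
have im : (i < m)%N by lia.
have [p1 [W1 rkW1 W1_lower]] := sigma_lower_subspace B kim.
have [p2 [W2 rkW2 W2_upper]] := sigma_upper_subspace (P *m B) im.
have rk_kerV : (m - k <= \rank (kermx V))%N.
  by rewrite mxrank_ker; have := rank_leq_col V; lia.
have rkW12 := mxrank_cap_ge W1 W2.
have [|r r_neq0] := capmx_nonzero (A := (W1 :&: W2)%MS) (B := kermx V); first lia.
rewrite !sub_capmx => /andP[/andP[rW1 rW2] /sub_kermxP rV0].
rewrite -(ler_sqr_dotmx r_neq0 (sigma_ge0 _ _) (sigma_ge0 _ _)).
apply: le_trans (W1_lower r rW1) _.
suff -> : r *m B = r *m (P *m B) by exact: W2_upper.
by rewrite mulmxA mulmx_coproj_id.
Qed.

End CoprojInterlacing.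

Lemma right_sing_vec_sub m n (A : 'M[C]_(m, n)) v s :
  s != 0 -> right_sing_vec A v s -> (v ^t* <= A)%MS.
Proof.
move=> s_neq0 [u [_ _ Au]]; have -> : v = s^-1 *: (A ^t* *m u).
  by rewrite Au scalerA mulVf ?scale1r.
by rewrite linearZ /= map_mxZ trmx_mul map_mxM trmxCK scalemx_sub ?submxMl.
Qed.

Lemma left_sing_vec_sub m n (A : 'M[C]_(m, n)) u s :
  s != 0 -> left_sing_vec A u s -> (u ^t* <= A ^t*)%MS.
Proof.
move=> s_neq0 [v [_ Av _]]; have -> : u = s^-1 *: (A *m v).
  by rewrite Av scalerA mulVf ?scale1r.
by rewrite linearZ /= map_mxZ trmx_mul map_mxM scalemx_sub ?submxMl.
Qed.

Lemma row_adjmx m n (A : 'M[C]_(m, n)) j : row j (A ^t*) = (col j A) ^t*.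
Proof. by rewrite -map_row -tr_col. Qed.

End SingularValues.

Theorem proposition2 (R : rcfType) (NT NR G L : nat)
  (HD : 'M[R[i]]_(NR, NT)) (HB : 'M[R[i]]_(NR, G * L)) (HF : 'M[R[i]]_(G * L, NT))
  (k : nat) :
  (0 < NT)%N -> (0 < NR)%N -> (0 < G)%N -> (0 < L)%N ->
  k = minn (\rank HB) (\rank HF) ->
  (k <= minn NT NR)%N ->
  forall (Theta_ : 'I_G -> 'M[R[i]]_L),
  (forall g, Theta_ g \is unitarymx) ->
  let H := HD + HB *m blkdiag Theta_ *m HF in
  let N := minn NT NR in
  (* case rank(HF) = k *)
  (\rank HF = k ->
   forall VF : 'M[R[i]]_(NT, k),
   VF ^t* *m VF = 1%:M ->
   (forall j, exists2 s : R[i], 0 < s & right_sing_vec HF (col j VF) s) ->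
   forall (m : nat) (T : 'M[R[i]]_(NR, m)),
   T *m T ^t* = HD *m (1%:M - VF *m VF ^t*) *m HD ^t* ->
   (forall n, (k < n)%N -> sigma H n <= sigma T (n - k)) /\
   (forall n, (0 < n)%N -> (n < N - k + 1)%N -> sigma T n <= sigma H n)) /\
  (* case rank(HB) = k *)
  (\rank HB = k ->
   forall UB : 'M[R[i]]_(NR, k),
   UB ^t* *m UB = 1%:M ->
   (forall j, exists2 s : R[i], 0 < s & left_sing_vec HB (col j UB) s) ->
   forall (m : nat) (T : 'M[R[i]]_(NT, m)),
   T *m T ^t* = HD ^t* *m (1%:M - UB *m UB ^t*) *m HD ->
   (forall n, (k < n)%N -> sigma H n <= sigma T (n - k)) /\
   (forall n, (0 < n)%N -> (n < N - k + 1)%N -> sigma T n <= sigma H n)).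
Proof.
move=> _ _ _ _ _ _ Theta _ H N; split.
- move=> rkF VF VF_orth VF_sing m T TT.
  have HF_P : HF *m coproj VF = 0.
    apply: mulmx_coproj_eq0 rkF => //; apply/row_subP => j; rewrite row_adjmx.
    by have [s /lt0r_neq0 s_neq0] := VF_sing j; exact: right_sing_vec_sub s_neq0.
  have HP : H *m coproj VF = HD *m coproj VF.
    by rewrite mulmxDl -mulmxA HF_P mulmx0 addr0.
  have sT : sigma T =1 sigma (H *m coproj VF).
    by apply: sigma_gramC; rewrite HP gram_mulmx_coproj.
  by split=> n n_gt *; rewrite sT; [exact: sigma_le_coproj | exact: sigma_coproj_le].
- move=> rkB UB UB_orth UB_sing m T TT.
  have HB_Q : HB ^t* *m coproj UB = 0.
    apply: mulmx_coproj_eq0; rewrite ?mxrank_map ?mxrank_tr //.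
    apply/row_subP => j; rewrite row_adjmx.
    by have [s /lt0r_neq0 s_neq0] := UB_sing j; exact: left_sing_vec_sub s_neq0.
  have HQ : H ^t* *m coproj UB = HD ^t* *m coproj UB.
    rewrite /H [_ ^T]linearD /= map_mxD mulmxDl !trmx_mul !map_mxM -!mulmxA HB_Q.
    by rewrite !mulmx0 addr0.
  have sT : sigma T =1 sigma (H ^t* *m coproj UB).
    by apply: sigma_gramC; rewrite HQ gram_mulmx_coproj // trmxCK.
  split=> n n_gt *; rewrite sT -[sigma H n]sigma_adjmx;
    [exact: sigma_le_coproj | exact: sigma_coproj_le].
Qed.
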